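(* Fix integers $q\ge 1$ and $k\ge 4$, and let $G(q,k)$ be the graph on vertex set $\{v_0,v_1,\ldots,v_{kq}\}$ in which, with all indices taken modulo $kq+1$, the neighbourhood of $v_i$ is $$\{v_{i-1},v_{i+1}\}\cup\{v_{i+kj+m} : m=2,3,\ldots,k-1,\ j=0,1,\ldots,q-1\}.$$ Then $G(q,k)$ is $2K_2$-free.
   Context: $2K_2$ denotes the disjoint union of two copies of $K_2$ (i.e. two disjoint edges with no edges between them). A graph is $H$-free if it contains no induced subgraph isomorphic to $H$. *)

From mathcomp Require Import all_boot.
Set Implicit Arguments. Unset Strict Implicit. Unset Printing Implicit Defensive.

Definition Gqk_adj (q k : nat) : rel 'I_(k * q + 1) :=
  fun x y =>
    let n := k * q + 1 in
    [|| val y == (x + 1) %% n,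
        val y == (x + n - 1) %% n
      | [exists j : 'I_q, exists m : 'I_k,
           (2 <= m) && (val y == (x + k * j + m) %% n)]].

Arguments Gqk_adj q k : clear implicits.

Definition twoK2_free (T : finType) (e : rel T) : Prop :=
  ~ exists a b c d : T,
      [/\ uniq [:: a; b; c; d], e a b, e c d &
          [/\ ~~ e a c, ~~ e a d, ~~ e b c & ~~ e b d]].

From mathcomp Require Import all_boot zify.

(* G(q,k) is the circulant graph on Z/n, n = kq + 1, whose offsets are 1,
   -1 = kq and the residues r with r mod k >= 2; the remaining nonzero
   residues ("gaps") lie strictly between 1 and kq and are 0 or 1 mod k.
   Translate an induced 2K_2 {ab, cd} so that a = 0: then s = b is an offset
   while u = c, w = d, u - s and w - s are gaps.  Writing out u = s + (u - s)
   modulo n and reducing mod k shows that u mod k is forced by s (it is 1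
   iff s = 1 or s = 2 mod k; k >= 4 keeps this apart from s = k - 1 mod k).
   Hence u = w mod k, so w - u is not an offset and cd is not an edge. *)

Lemma modn_small2 a d : a < d + d -> a %% d = if a < d then a else a - d.
Proof.
case: ifP => [/modn_small //|/negbT]; rewrite -leqNgt => le_da lt_a.
by rewrite -{1}(subnK le_da) modnDr modn_small //; lia.
Qed.

Lemma modnD_if a b d : 0 < d ->
  (a + b) %% d = if a %% d + b %% d < d then a %% d + b %% d else a %% d + b %% d - d.
Proof.
move=> d_gt0; rewrite -modnDm modn_small2 //.
by have := ltn_pmod a d_gt0; have := ltn_pmod b d_gt0; lia.
Qed.

Lemma eq_twoK2_free {T : finType} {e e' : rel T} :
  e =2 e' -> twoK2_free e' -> twoK2_free e.
Proof.
move=> ee' free' [a [b [c [d abcd]]]]; apply: free'.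
by exists a, b, c, d; rewrite -!ee'.
Qed.

(* The residue of y - x modulo n, provided x <= n (truncated subtraction). *)
Definition cdiff n x y := (y + n - x) %% n.

Lemma cdiffE n x y : x < n -> y < n ->
  cdiff n x y = if x <= y then y - x else y + n - x.
Proof.
move=> lt_xn lt_yn; rewrite /cdiff modn_small2; last lia.
by case: ifP; case: ifP; lia.
Qed.

Lemma cdiff_eq n x y r : x <= n -> r < n ->
  (x + r == y %[mod n]) = (cdiff n x y == r).
Proof.
move=> le_xn lt_rn; rewrite -(modnDr y) -(subnKC (leq_trans le_xn (leq_addl y n))).
by rewrite eqn_modDl (modn_small lt_rn) eq_sym.
Qed.

Lemma cdiffK n x y : 0 < n -> x <= n -> x + cdiff n x y = y %[mod n].
Proof. by move=> n_gt0 le_xn; apply/eqP; rewrite cdiff_eq // ltn_mod. Qed.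

Lemma eq_modn_cdiff n x y t : x <= n -> y < n -> t < n ->
  (y == (x + t) %% n) = (cdiff n x y == t).
Proof. by move=> le_xn lt_yn lt_tn; rewrite -cdiff_eq // (modn_small lt_yn) eq_sym. Qed.

Lemma cdiff_eq0 n x y : x < n -> y < n -> (cdiff n x y == 0) = (x == y).
Proof. by move=> lt_xn lt_yn; rewrite cdiffE //; case: leqP => xy; apply/eqP/eqP; lia. Qed.

Lemma cdiff_shift n x y z : x < n -> y < n -> z < n ->
  cdiff n (cdiff n x y) (cdiff n x z) = cdiff n y z.
Proof.
move=> lt_xn lt_yn lt_zn; have n_gt0 : 0 < n by lia.
have cdiff_lt u v : cdiff n u v < n by rewrite ltn_mod.
apply/eqP; rewrite -cdiff_eq ?(ltnW (cdiff_lt _ _)) //.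
rewrite -(eqn_modDl x) addnA -modnDml cdiffK ?(ltnW lt_xn) // modnDml.
by rewrite !cdiffK ?(ltnW lt_yn) ?(ltnW lt_xn).
Qed.

Section Circulant.

Variables (n : nat) (C : pred nat).

Definition circulant : rel 'I_n := fun x y => C (cdiff n x y).

Definition nonedge r := (r != 0) && ~~ C r.

Lemma circulant_twoK2_free :
  (forall s u w, s < n -> u < n -> w < n -> C s ->
     nonedge u -> nonedge w -> nonedge (cdiff n s u) -> nonedge (cdiff n s w) ->
     ~~ C (cdiff n u w)) ->
  twoK2_free circulant.
Proof.
move=> noC [a [b [c [d [uniq_abcd Cab Ccd [Cac Cad Cbc Cbd]]]]]].
move: uniq_abcd; rewrite /= !inE !negb_or.
case/and4P=> /and3P [ab ac ad] /andP [bc bd] _ _.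
have nonedgeP (x y : 'I_n) : x != y -> ~~ circulant x y -> nonedge (cdiff n x y).
  by move=> xy nCxy; apply/andP; rewrite cdiff_eq0 ?ltn_ord.
have n_gt0 : 0 < n := leq_ltn_trans (leq0n a) (ltn_ord a).
have := noC _ _ _ (ltn_pmod _ n_gt0) (ltn_pmod _ n_gt0) (ltn_pmod _ n_gt0) Cab
  (nonedgeP _ _ ac Cac) (nonedgeP _ _ ad Cad).
rewrite !cdiff_shift ?ltn_ord // (nonedgeP _ _ bc Cbc) (nonedgeP _ _ bd Cbd).
by move/(_ isT isT)/negP.
Qed.

End Circulant.

Section Gqk.

Variables q k : nat.
Implicit Types r s u w : nat.

Local Notation n := (k * q + 1).

Definition conn r := [|| r == 1, r == k * q | 2 <= r %% k].

Definition gap r := [&& 1 < r, r < k * q & r %% k <= 1].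

Lemma offset_decomp r : r < n ->
  [exists j : 'I_q, exists m : 'I_k, (2 <= m) && (r == k * j + m)] = (2 <= r %% k).
Proof.
move=> lt_rn; apply/existsP/idP => [[j /existsP [m /andP [m_ge2 /eqP ->]]] | r_ge2].
  by rewrite mulnC modnMDl modn_small.
have k_gt0 : 0 < k by lia.
have lt_jq : r %/ k < q.
  by rewrite -(ltn_pmul2r k_gt0); move: (divn_eq r k); lia.
exists (Ordinal lt_jq); apply/existsP; exists (Ordinal (ltn_pmod r k_gt0)).
by rewrite /= r_ge2 mulnC -divn_eq eqxx.
Qed.

Lemma Gqk_adjE : 0 < k * q -> Gqk_adj q k =2 circulant n conn.
Proof.
move=> kq_gt0 x y; have [lt_xn lt_yn] := (ltn_ord x, ltn_ord y).
rewrite /Gqk_adj /circulant /conn -offset_decomp ?ltn_pmod ?addn1 //.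
have -> : x + n - 1 = x + k * q by lia.
have [lt_1n lt_kqn] : 1 < n /\ k * q < n by lia.
rewrite !eq_modn_cdiff ?(ltnW lt_xn) //.
congr [|| _, _ | _]; apply: eq_existsb => j; apply: eq_existsb => m.
rewrite -addnA eq_modn_cdiff ?(ltnW lt_xn) //.
have : k * j.+1 <= k * q by rewrite leq_mul2l ltn_ord orbT.
by rewrite mulnS; have := ltn_ord m; lia.
Qed.

Hypothesis k_ge4 : 4 <= k.

Lemma nonedge_conn r : r < n -> nonedge conn r = gap r.
Proof. by rewrite /nonedge /conn /gap; lia. Qed.

Lemma gap_modk s u : s < n -> conn s -> gap u -> gap (cdiff n s u) ->
  u %% k = (s == 1) || (s %% k == 2).
Proof.
move=> lt_sn Cs /and3P [u_gt1 lt_ukq u_modk].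
have [lt_un k_gt0] : u < n /\ 0 < k by lia.
rewrite cdiffE //.
have mod1 : 1 %% k = 1 by rewrite modn_small //; lia.
case/or3P: Cs => [/eqP s1 | /eqP skq | s_modk].
- rewrite s1 ifT /=; last lia.
  case/and3P=> _ _ v_modk.
  have := congr1 (modn^~ k) (esym (subnK (ltnW u_gt1))).
  by rewrite /= modnD_if // mod1; case: ifP; lia.
- rewrite skq ifN; last lia.
  case/and3P=> _ _; have -> : u + n - k * q = u + 1 by lia.
  by rewrite modnD_if // mod1 modnMr; case: ifP; lia.
have s_ne1 : s != 1 by apply: contraTneq s_modk => ->; rewrite mod1.
have lt_sk := ltn_pmod s k_gt0.
rewrite (negbTE s_ne1) /=; case: leqP => [le_su | lt_us] /and3P [_ _ v_modk].
- have := congr1 (modn^~ k) (subnKC le_su).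
  by rewrite /= modnD_if //; case: ifP; lia.
- have e : (u + n - s) + s = q * k + (u + 1) by lia.
  have := congr1 (modn^~ k) e.
  by rewrite /= modnMDl !modnD_if // mod1; case: ifP; case: ifP; lia.
Qed.

Lemma gap_cdiff u w : gap u -> gap w -> u %% k = w %% k -> ~~ conn (cdiff n u w).
Proof.
move=> /and3P [u_gt1 lt_ukq _] /and3P [w_gt1 lt_wkq _] uw_modk.
have [lt_un lt_wn] : u < n /\ w < n by lia.
have mod1 : 1 %% k = 1 by rewrite modn_small //; lia.
rewrite /conn cdiffE //; case: (leqP u w) => [le_uw | lt_wu].
- have /eqP r0 : k %| w - u by rewrite -eqn_mod_dvd // uw_modk.
  rewrite r0 orbF; apply/norP; split; last lia.
  by apply/eqP => r1; rewrite r1 mod1 in r0.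
- have e : (w + n - u) + u = q * k + (1 + w) by lia.
  have : w + n - u == 1 %[mod k].
    by rewrite -(eqn_modDr u) e modnMDl -modnDmr -uw_modk modnDmr.
  rewrite mod1 => /eqP r1; rewrite r1 orbF; apply/norP; split; first lia.
  by apply/eqP => rkq; rewrite rkq modnMr in r1.
Qed.

Lemma conn_twoK2_condition s u w : s < n -> u < n -> w < n -> conn s ->
  nonedge conn u -> nonedge conn w ->
  nonedge conn (cdiff n s u) -> nonedge conn (cdiff n s w) ->
  ~~ conn (cdiff n u w).
Proof.
move=> lt_sn lt_un lt_wn Cs.
have lt_cdiff r : cdiff n s r < n by rewrite ltn_mod addn1.
rewrite !nonedge_conn ?lt_cdiff // => gu gw gsu gsw.
by apply: gap_cdiff => //; rewrite (gap_modk s u) ?(gap_modk s w).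
Qed.

End Gqk.

Theorem lemma2p3 (q k : nat) (hq : 1 <= q) (hk : 4 <= k) :
  twoK2_free (Gqk_adj q k).
Proof.
have kq_gt0 : 0 < k * q by rewrite muln_gt0 hq (leq_trans _ hk).
apply: eq_twoK2_free (Gqk_adjE q k kq_gt0) _.
by apply: circulant_twoK2_free; apply: conn_twoK2_condition.
Qed.
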